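(* Let $M$ and $N$ be monoids with finite generating sets $X$ and $Y$ respectively, and let $f:(M,d_X)\to(N,d_Y)$ be a quasi-isometric embedding. If $S\subseteq M$ is infinite, then $f(S)$ is infinite.
   Context: For a monoid $M$ generated by a finite set $X$, $d_X(x,y)=\inf\{|w|:w\in X^*,\ xw=y\}$, where $X^*$ is the free monoid on $X$ and $\inf\emptyset=\infty$. A map $f:(M,d_X)\to(N,d_Y)$ is a quasi-isometric embedding if there are constants $1\le\lambda<\infty$, $0<\epsilon<\infty$ with $\frac1\lambda d_X(x,y)-\epsilon\le d_Y(f(x),f(y))\le\lambda d_X(x,y)+\epsilon$ for all $x,y\in M$ (with $\infty$ absorbing addition and multiplication by positive reals). *)

From HB Require Import structures.
From mathcomp Require Import all_boot all_order all_algebra.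
From mathcomp Require Import all_classical all_reals ereal.
Set Implicit Arguments. Unset Strict Implicit. Unset Printing Implicit Defensive.
Import Order.TTheory GRing.Theory Num.Theory.

Local Open Scope classical_set_scope.
Local Open Scope ereal_scope.

Definition word_eval (M : monoidType) (w : seq M) : M :=
  (\prod_(a <- w) a)%g.

Definition generates (M : monoidType) (X : seq M) : Prop :=
  forall m : M, exists w : seq M, {subset w <= X} /\ word_eval w = m.

Definition dist (R : realType) (M : monoidType) (X : seq M) (x y : M) : \bar R :=
  ereal_inf [set ((size w)%:R)%:E | w in
     [set w : seq M | {subset w <= X} /\ (x * word_eval w)%g = y]].

Definition quasi_isometric_embedding (R : realType) (M N : monoidType)
    (X : seq M) (Y : seq N) (f : M -> N) : Prop :=
  exists (lam eps : R), (1 <= lam)%R /\ (0 < eps)%R /\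
    forall x y : M,
      (lam^-1)%:E * dist R X x y - eps%:E <= dist R Y (f x) (f y) /\
      dist R Y (f x) (f y) <= lam%:E * dist R X x y + eps%:E.

From HB Require Import structures.
From mathcomp Require Import all_boot all_order all_algebra.
From mathcomp Require Import all_classical all_reals ereal.
Import Order.TTheory GRing.Theory Num.Theory.
Local Open Scope classical_set_scope.

(* Since X is finite there are finitely many words of each length, so every
   d_X-ball of finite radius is finite.  Two points with the same image under a
   quasi-isometric embedding are at d_X-distance at most lam * eps, so every
   fibre of f lies in such a ball; an infinite set cannot be covered by finitely
   many finite fibres. *)

Lemma infinite_image_finite_fibres (T U : Type) (f : T -> U) (S : set T) :
    (forall x, S x -> finite_set (S `&` f @^-1` [set f x])) ->
  infinite_set S -> infinite_set (f @` S).
Proof.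
move=> fibre_fin Sinf fSfin; apply: Sinf.
apply: (@sub_finite_set _ _ (\bigcup_(z in f @` S) (S `&` f @^-1` [set z]))).
  by move=> y Sy; exists (f y); [exists y | split].
apply: bigcup_finite => // _ [x Sx <-]; exact: fibre_fin.
Qed.

Section WordMetric.
Context {R : realType} {M : monoidType} (X : seq M).

Definition words_of_size (n : nat) : set (seq M) :=
  [set w | {subset w <= X} /\ size w = n].

Lemma finite_words_of_size n : finite_set (words_of_size n).
Proof.
elim: n => [|n IH].
  apply: (@sub_finite_set _ _ [set [::]]); last exact: finite_set1.
  by move=> [|a w] [_ //].
apply: (@sub_finite_set _ _
  [set p.1 :: p.2 | p in [set` X] `*` words_of_size n]).
  move=> [|a w] [wX //] [sw]; exists (a, w) => //; split => /=.
    by apply: wX; rewrite inE eqxx.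
  by split=> // x xw; apply: wX; rewrite inE xw orbT.
by apply: finite_image; apply: finite_setX => //; exact: finite_seq.
Qed.

Lemma dist_xx (x : M) : dist R X x x = 0%E.
Proof.
apply/le_anti/andP; split.
  apply: ge_ereal_inf; exists 0%E => //; exists [::] => //.
  by split=> //; rewrite /word_eval big_nil mulg1.
by apply/ereal_infP => _ [w _ <-]; rewrite lee_fin.
Qed.

Lemma finite_dist_ball (x : M) (r : R) :
  finite_set [set y | (dist R X x y < r%:E)%E].
Proof.
set n := (Num.truncn r).+1.
apply: (@sub_finite_set _ _
  [set (x * word_eval w)%g | w in \bigcup_(k in `I_n) words_of_size k]).
  move=> y /ereal_inf_lt[_ [w [wX <-] <-]]; rewrite lte_fin => wr.
  have sw : (size w < n)%N by rewrite -(@ltr_nat R) (lt_trans wr) ?truncnS_gt.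
  by exists w => //; exists (size w).
apply: finite_image; apply: bigcup_finite; first exact: finite_II.
by move=> k _; exact: finite_words_of_size.
Qed.

End WordMetric.

Lemma qie_fibre_dist_bounded {R : realType} {M N : monoidType}
    {X : seq M} {Y : seq N} {f : M -> N} :
    quasi_isometric_embedding R X Y f ->
  exists r : R, forall x y, f x = f y -> (dist R X x y < r%:E)%E.
Proof.
case=> lam [eps [lam_ge1 [_ qie]]].
have lam_gt0 : (0 < lam)%R by rewrite (lt_le_trans ltr01).
exists (lam * eps + 1)%R => x y fxy.
have [+ _] := qie x y; rewrite fxy dist_xx sube_le0 lee_pdivrMl // => dle.
by rewrite (le_lt_trans dle) // lte_fin ltrDl.
Qed.

Theorem lemma7p1 (R : realType) (M N : monoidType) (X : seq M) (Y : seq N)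
    (hX : generates X) (hY : generates Y) (f : M -> N)
    (hf : quasi_isometric_embedding R X Y f) (S : set M) :
  infinite_set S -> infinite_set (f @` S).
Proof.
have [r fibre_near] := qie_fibre_dist_bounded hf.
apply: infinite_image_finite_fibres => x _.
apply: (sub_finite_set _ (finite_dist_ball X x r)).
by move=> y [_ fyx]; apply: fibre_near.
Qed.
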